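(* Let $[X,d,m]$ be a metric random walk space with invariant and reversible probability measure $\nu$. Then $h_m(X)=\lambda_1^m(X)$, where $$h_m(X)=\inf\Big\{\frac{P_m(D)}{\min\{\nu(D),\nu(X\setminus D)\}}: D\subset X \ \nu\text{-measurable},\ 0<\nu(D)<1\Big\},$$ $$\lambda_1^m(X)=\inf\big\{TV_m(u): u\in L^1(X,\nu),\ \|u\|_{L^1(X,\nu)}=1,\ 0\in{\rm med}_\nu(u)\big\}.$$
   Context: A metric random walk space $[X,d,m]$ is a Polish metric space $(X,d)$ with a family $m=(m_x)_{x\in X}$ of Borel probability measures, $x\mapsto m_x(A)$ Borel measurable, each with finite first moment. A Radon measure $\nu$ is invariant if $\nu(A)=\int_X m_x(A)d\nu(x)$ for all $\nu$-measurable $A$, reversible if $dm_x(y)d\nu(x)=dm_y(x)d\nu(y)$. The $m$-perimeter is $P_m(E)=\int_E\int_{X\setminus E}dm_x(y)d\nu(x)$ and the $m$-total variation is $TV_m(u)=\frac12\int_X\int_X|u(y)-u(x)|\,dm_x(y)d\nu(x)$. A number $\mu$ is a median of $u$ with respect to $\nu$, written $\mu\in{\rm med}_\nu(u)$, if $\nu(\{u<\mu\})\le\frac12\nu(X)$ and $\nu(\{u>\mu\})\le\frac12\nu(X)$. *)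

From HB Require Import structures.
From mathcomp Require Import all_boot all_order all_algebra.
From mathcomp Require Import all_classical all_reals all_analysis.
Set Implicit Arguments. Unset Strict Implicit. Unset Printing Implicit Defensive.
Import Order.TTheory GRing.Theory Num.Theory.
Local Open Scope classical_set_scope.
Local Open Scope ring_scope.

Section MRW.
Context {R : realType}.

Section Metric.
Variable (T : Type) (dist : T -> T -> R).

Definition is_metric : Prop :=
  [/\ (forall x y, 0 <= dist x y),
      (forall x y, dist x y = 0 <-> x = y),
      (forall x y, dist x y = dist y x) &
      (forall x y z, dist x z <= dist x y + dist y z)].

Definition d_open (A : set T) : Prop :=
  forall x, A x -> exists e : R, 0 < e /\ forall y, dist x y < e -> A y.

Definition d_complete : Prop :=
  forall u : nat -> T,
    (forall e : R, 0 < e -> exists N, forall n k, (N <= n)%N -> (N <= k)%N ->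
        dist (u n) (u k) < e) ->
    exists l, forall e : R, 0 < e -> exists N, forall n, (N <= n)%N -> dist (u n) l < e.

Definition d_separable : Prop :=
  exists S : set T, countable S /\
    forall x (e : R), 0 < e -> exists s, S s /\ dist x s < e.

Definition polish_metric : Prop := [/\ is_metric, d_complete & d_separable].
End Metric.

Context {d : measure_display} {X : measurableType d}.

Definition borel_for (dist : X -> X -> R) : Prop :=
  (@measurable d X) = <<s [set A | d_open dist A] >>.

Definition metric_random_walk_space (dist : X -> X -> R)
    (m : R.-pker X ~> X) : Prop :=
  [/\ polish_metric dist, borel_for dist &
      forall x, (\int[m x]_y (dist x y)%:E < +oo)%E].

Definition m_invariant (m : R.-pker X ~> X) (nu : {measure set X -> \bar R}) : Prop :=
  forall A, measurable A -> nu A = (\int[nu]_x m x A)%E.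

(* dm_x(y)dnu(x) = dm_y(x)dnu(y) as measures on X x X, tested on rectangles A x B *)
Definition m_reversible (m : R.-pker X ~> X) (nu : {measure set X -> \bar R}) : Prop :=
  forall A B, measurable A -> measurable B ->
    (\int[nu]_(x in A) m x B)%E = (\int[nu]_(x in B) m x A)%E.

Definition Pm (m : R.-pker X ~> X) (nu : {measure set X -> \bar R}) (E : set X) : \bar R :=
  (\int[nu]_(x in E) m x (~` E))%E.

Definition TVm (m : R.-pker X ~> X) (nu : {measure set X -> \bar R}) (u : X -> R) : \bar R :=
  ((2%:R^-1)%:E * \int[nu]_x \int[m x]_y `|u y - u x|%:E)%E.

Definition is_median (nu : {measure set X -> \bar R}) (u : X -> R) (mu : R) : Prop :=
  (nu [set x | (u x < mu)%R] <= (2%:R^-1)%:E * nu setT)%E /\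
  (nu [set x | (u x > mu)%R] <= (2%:R^-1)%:E * nu setT)%E.

Definition cheeger_const (m : R.-pker X ~> X) (nu : {measure set X -> \bar R}) : \bar R :=
  ereal_inf [set (Pm m nu D / Order.min (nu D) (nu (~` D)))%E | D in
     [set D : set X | measurable D /\ (0 < nu D)%E /\ (nu D < 1)%E]].

Definition lambda1 (m : R.-pker X ~> X) (nu : {measure set X -> \bar R}) : \bar R :=
  ereal_inf [set TVm m nu u | u in
     [set u : X -> R | measurable_fun setT u /\ nu.-integrable setT (EFin \o u) /\
        (\int[nu]_x `|u x|%:E = 1)%E /\ is_median nu u 0]].

End MRW.

From HB Require Import structures.
From mathcomp Require Import all_boot all_order all_algebra.
From mathcomp Require Import all_classical all_reals all_analysis.
From mathcomp Require Import measurable_realfun lra.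

(* lambda_1 <= h_m: if 0 < nu(D) <= 1/2, the function 1_D / nu(D) has median 0
   and unit L^1 norm, and its total variation is P_m(D) / nu(D); if
   nu(D) > 1/2, use the complement of D, which has the same perimeter by
   reversibility.
   h_m <= lambda_1: if u has median 0, the superlevel sets {u > t} and
   {-u > t}, t >= 0, have measure at most 1/2, so c nu(E) <= P_m(E) for each
   of them whenever c <= h_m.  Integrating over t, the layer cake formula
   ||u||_1 = int nu(u > t) + nu(-u > t) dt and the coarea formula
   TV_m(u) = int P_m(u > t) + P_m(-u > t) dt give c ||u||_1 <= TV_m(u).
   Both formulas are used in discretized form, as Riemann sums over the
   heights t = k dl, which are exact up to an error O(dl). *)

Set Implicit Arguments. Unset Strict Implicit. Unset Printing Implicit Defensive.
Import Order.TTheory GRing.Theory Num.Theory.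
Local Open Scope classical_set_scope.
Local Open Scope ring_scope.

Section Staircase.
Variables (R : realType) (dl : R).
Hypothesis dl_gt0 : 0 < dl.

(* For [a >= 0], [\sum_k dl * step a k] is [a] rounded up to a multiple of [dl]. *)
Local Notation step a k := (((k%:R * dl < a)%R)%:R : R).

Lemma step_le0 (a : R) k : a <= 0 -> step a k = 0.
Proof.
move=> a_le0; have : 0 <= k%:R * dl by rewrite mulr_ge0 // ltW.
by case: ltrP => //; lra.
Qed.

Lemma sum_step_ge (a : R) n :
  n%:R * dl <= \sum_(0 <= k < n) dl * step a k \/
  a <= \sum_(0 <= k < n) dl * step a k.
Proof.
elim: n => [|n IH]; first by left; rewrite big_geq // mul0r.
rewrite big_nat_recr //= -[n.+1]addn1 natrD mulrDl mul1r.
case: (ltrP (n%:R * dl) a) => /= h; rewrite ?mulr1 ?mulr0 ?addr0;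
  by case: IH => IH; first [left; lra | right; lra].
Qed.

Lemma sum_step_jump_le (a b : R) n : a <= b ->
  \sum_(0 <= k < n) dl * `|step b k - step a k| <= b - a + dl.
Proof.
move=> le_ab.
suff : let S := \sum_(0 <= k < n) dl * `|step b k - step a k| in
    S = 0 \/ S <= n%:R * dl - a /\ S <= b - a + dl.
  by have := dl_gt0; move=> /= ? [->|[_ ?]]; lra.
elim: n => [|n IH]; first by left; rewrite big_geq.
rewrite /= big_nat_recr //= -[n.+1]addn1 natrD mulrDl mul1r.
case: (ltrP (n%:R * dl) b) => nb; case: (ltrP (n%:R * dl) a) => na /=;
  rewrite ?subrr ?subr0 ?sub0r ?normrN ?normr0 ?normr1 ?mulr0 ?mulr1 ?addr0;
  have := dl_gt0; case: IH => [->|[? ?]] ?; try (by left); right; split; lra.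
Qed.

Lemma step_max0 (a : R) k : step (Order.max a 0) k = step a k.
Proof. by case: (lerP a 0) => // a_le0; rewrite !step_le0. Qed.

Lemma sum_step_jump_sym_le (a b : R) n :
  \sum_(0 <= k < n) dl * `|step b k - step a k| +
  \sum_(0 <= k < n) dl * `|step (- b) k - step (- a) k| <= `|b - a| + 2 * dl.
Proof.
wlog le_ab : a b / a <= b.
  move=> wlog_ab; have [/wlog_ab //|/ltW/wlog_ab] := leP a b.
  rewrite distrC; under eq_bigr do rewrite distrC.
  by under [X in _ + X]eq_bigr do rewrite distrC.
have posneg (x : R) : Order.max x 0 - Order.max (- x) 0 = x.
  by case: (lerP x 0); case: (lerP (- x) 0); lra.
under eq_bigr do rewrite -[step b _]step_max0 -[step a _]step_max0.
under [X in _ + X <= _]eq_bigr do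
  rewrite distrC -[step (- a) _]step_max0 -[step (- b) _]step_max0.
have := sum_step_jump_le n (le_max2 le_ab (lexx 0)).
have le_Nba : - b <= - a by rewrite lerN2.
have := sum_step_jump_le n (le_max2 le_Nba (lexx 0)).
rewrite ger0_norm ?subr_ge0 //; have := posneg a; have := posneg b; lra.
Qed.

Local Open Scope ereal_scope.

Lemma step_ge0 (a : R) k : 0 <= (dl * step a k)%:E.
Proof. by rewrite lee_fin mulr_ge0 // ltW. Qed.

Lemma eseries_step_ge (a : R) : a%:E <= \sum_(0 <= k <oo) (dl * step a k)%:E.
Proof.
pose n := (Num.trunc (a / dl)).+1.
have a_lt : (a < n%:R * dl)%R by rewrite -ltr_pdivrMr // truncnS_gt.
apply: le_trans (nneseries_lim_ge n (fun k _ _ => step_ge0 a k)).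
rewrite sumEFin lee_fin; have [|] := sum_step_ge a n; lra.
Qed.

Lemma abs_le_eseries_step (a : R) :
  `|a|%:E <= \sum_(0 <= k <oo) (dl * step a k)%:E +
             \sum_(0 <= k <oo) (dl * step (- a) k)%:E.
Proof.
have series_ge0 b : 0 <= \sum_(0 <= k <oo) (dl * step b k)%:E.
  by apply: nneseries_ge0 => k _ _; exact: step_ge0.
case: (ger0P a) => _.
  by rewrite -[X in X <= _]adde0; apply: leeD; [exact: eseries_step_ge|].
by rewrite -[X in X <= _]add0e; apply: leeD; [|exact: eseries_step_ge].
Qed.

Lemma eseries_step_jump_le (a b : R) :
  \sum_(0 <= k <oo) (dl * `|step b k - step a k|)%:E +
  \sum_(0 <= k <oo) (dl * `|step (- b) k - step (- a) k|)%:E <=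
  (`|b - a| + 2 * dl)%:E.
Proof.
have jump_ge0 c d k : 0 <= (dl * `|step c k - step d k|)%:E.
  by rewrite lee_fin mulr_ge0 // ltW.
rewrite -nneseriesD; last 2 first.
- by move=> k _ _; exact: jump_ge0.
- by move=> k _ _; exact: jump_ge0.
apply: lime_le; first by apply: is_cvg_nneseries => k _ _; rewrite adde_ge0.
by apply: nearW => n; rewrite big_split /= !sumEFin -EFinD lee_fin sum_step_jump_sym_le.
Qed.
End Staircase.

Lemma lee_ge0_lbounds (R : realType) (x y : \bar R) : (0 <= y)%E ->
  (forall c : R, 0 <= c -> (c%:E <= x)%E -> (c%:E <= y)%E) -> (x <= y)%E.
Proof.
move=> y_ge0 le_xy; case: x le_xy => [r| |] le_xy; last exact: leNye.
- have [r_ge0|r_lt0] := lerP 0 r; first exact: le_xy.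
  by apply: le_trans y_ge0; rewrite lee_fin ltW.
- rewrite leye_eq; apply/eqP/eq_infty => r.
  apply: le_trans (le_xy (Order.max r 0) _ _); rewrite ?lee_fin ?le_max ?lexx ?orbT //.
  exact: leey.
Qed.

Section Superlevel.
Context (R : realType).

Lemma indic_superlevel (T : Type) (u : T -> R) (t : R) y :
  \1_[set x | t < u x] y = ((t < u y)%R)%:R :> R.
Proof.
rewrite indicE; case: (boolP (t < u y)%R) => h; first by rewrite mem_set.
by rewrite memNset //=; apply/negP.
Qed.

Lemma measurable_superlevel (disp : measure_display) (X : measurableType disp)
    (u : X -> R) (t : R) :
  measurable_fun setT u -> measurable [set x | t < u x].
Proof. by move=> mu; rewrite -preimage_itvoy -[_ @^-1` _]setTI; exact: mu. Qed.

End Superlevel.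

Section Perimeter.
Context (R : realType) (disp : measure_display) (X : measurableType disp)
  (m : R.-pker X ~> X) (nu : {measure set X -> \bar R}).
Local Open Scope ereal_scope.

Definition indic_jump (E : set X) x : \bar R := \int[m x]_y (`|\1_E y - \1_E x|)%:E.

Lemma indic_jump_ge0 E x : 0 <= indic_jump E x.
Proof. exact: integral_ge0. Qed.

Lemma measurable_kernel_absdiff (f : X -> R) : measurable_fun setT f ->
  measurable_fun setT (fun x => \int[m x]_y (`|f y - f x|)%:E : \bar R).
Proof.
move=> mf; apply: (measurable_fun_integral_finite_kernel
  (fun z : X * X => (`|f z.2 - f z.1|)%:E)) => //.
apply/measurable_EFinP; apply: measurableT_comp => //; apply: measurable_funB.
- exact: measurableT_comp mf measurable_snd.
- exact: measurableT_comp mf measurable_fst.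
Qed.

Lemma measurable_indic_jump E : measurable E -> measurable_fun setT (indic_jump E).
Proof. by move=> mE; apply: measurable_kernel_absdiff; exact: measurable_indic. Qed.

Lemma indic_jump_mem E x : measurable E -> E x -> indic_jump E x = m x (~` E).
Proof.
move=> mE Ex; rewrite -[X in m x X]setIT -integral_indic //; last exact: measurableC.
apply: eq_integral => y _; rewrite !indicE (mem_set Ex) in_setC.
by case: (y \in E); rewrite ?subrr ?normr0 ?sub0r ?normrN ?normr1.
Qed.

Lemma indic_jump_nmem E x : measurable E -> ~ E x -> indic_jump E x = m x E.
Proof.
move=> mE Ex; rewrite -[X in m x X]setIT -integral_indic //.
apply: eq_integral => y _; rewrite !indicE (memNset Ex) subr0.
by case: (y \in E); rewrite ?normr0 ?normr1.
Qed.

Lemma eseries_indic_jumpE (w : R) (B : nat -> set X) x : (0 <= w)%R ->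
  (forall k, measurable (B k)) ->
  \sum_(0 <= k <oo) (w%:E * indic_jump (B k) x) =
  \int[m x]_y \sum_(0 <= k <oo) (w * `|\1_(B k) y - \1_(B k) x|)%:E.
Proof.
move=> w_ge0 mB.
have mjump k : measurable_fun setT (fun y => (`|\1_(B k) y - \1_(B k) x|)%:E).
  apply/measurable_EFinP; apply: measurableT_comp => //.
  by apply: measurable_funB => //; exact: measurable_indic.
rewrite integral_nneseries; first last.
- by move=> k y _; rewrite lee_fin mulr_ge0.
- move=> k; apply/measurable_EFinP; apply: measurable_funM => //.
  by apply/measurable_EFinP; exact: mjump.
- by [].
by apply: eq_eseriesr => k _; rewrite /indic_jump -ge0_integralZl.
Qed.

Lemma measurable_eseries_indic_jump (w : R) (B : nat -> set X) : (0 <= w)%R ->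
  (forall k, measurable (B k)) ->
  measurable_fun setT (fun x => \sum_(0 <= k <oo) (w%:E * indic_jump (B k) x)).
Proof.
move=> w_ge0 mB; apply: (ge0_emeasurable_sum (P := xpredT)) => [k x _ _|k _].
  by apply: mule_ge0; [rewrite lee_fin|exact: indic_jump_ge0].
by apply: measurable_funeM; exact: measurable_indic_jump.
Qed.

Hypothesis nu_rev : m_reversible m nu.

Lemma integral_indic_jump E : measurable E ->
  \int[nu]_x indic_jump E x = Pm m nu E + Pm m nu E.
Proof.
move=> mE; have mCE := measurableC mE.
rewrite -[in LHS](setUv E) ge0_integral_setU //; first last.
- by rewrite /disj_set setICr.
- by move=> x _; apply: integral_ge0.
- by rewrite setUv; exact: measurable_indic_jump.
rewrite (eq_integral (fun x => m x (~` E))); last first.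
  by move=> x /set_mem; exact: indic_jump_mem.
rewrite [X in _ + X](eq_integral (fun x => m x E)); last first.
  by move=> x /set_mem; exact: indic_jump_nmem.
by rewrite /Pm nu_rev.
Qed.

Lemma Pm_setC E : measurable E -> Pm m nu (~` E) = Pm m nu E.
Proof. by move=> mE; rewrite /Pm setCK nu_rev //; exact: measurableC. Qed.

Lemma TVm_scale_indic E (a : R) : measurable E -> (0 <= a)%R ->
  TVm m nu (fun x => a * \1_E x)%R = a%:E * Pm m nu E.
Proof.
move=> mE a_ge0; rewrite /TVm.
under eq_integral => x _.
  rewrite (eq_integral (fun y => a%:E * (`|\1_E y - \1_E x|)%:E)); last first.
    by move=> y _; rewrite -mulrBr normrM ger0_norm.
  rewrite ge0_integralZl //; last first.
    apply/measurable_EFinP; apply: measurableT_comp => //.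
    by apply: measurable_funB => //; exact: measurable_indic.
  over.
rewrite ge0_integralZl //; last 2 first.
- exact: measurable_indic_jump.
- by move=> x _; apply: integral_ge0.
rewrite integral_indic_jump //.
have -> : Pm m nu E + Pm m nu E = (2%:R)%:E * Pm m nu E by rewrite mule_natl.
rewrite muleCA; congr (_ * _).
by rewrite muleA -EFinM mulVf ?mul1e // pnatr_eq0.
Qed.

Lemma integral_eseries_indic_jump (w : R) (B : nat -> set X) : (0 <= w)%R ->
  (forall k, measurable (B k)) ->
  \int[nu]_x \sum_(0 <= k <oo) (w%:E * indic_jump (B k) x) =
  \sum_(0 <= k <oo) (w%:E * (Pm m nu (B k) + Pm m nu (B k))).
Proof.
move=> w_ge0 mB; rewrite integral_nneseries //.
- apply: eq_eseriesr => k _; rewrite ge0_integralZl ?integral_indic_jump //.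
  + exact: measurable_indic_jump.
  + by move=> x _; apply: integral_ge0.
- by move=> k; apply: measurable_funeM; exact: measurable_indic_jump.
- by move=> k x _; apply: mule_ge0 => //; apply: integral_ge0.
Qed.

End Perimeter.

Lemma eseries_measureE (R : realType) (disp : measure_display)
    (X : measurableType disp) (nu : {measure set X -> \bar R})
    (w : R) (B : nat -> set X) : 0 <= w -> (forall k, measurable (B k)) ->
  (\sum_(0 <= k <oo) (w%:E * nu (B k)) =
   \int[nu]_y \sum_(0 <= k <oo) (w * \1_(B k) y)%:E)%E.
Proof.
move=> w_ge0 mB.
have mindic k : measurable_fun setT (fun y => (\1_(B k) y)%:E).
  by apply/measurable_EFinP; exact: measurable_indic.
rewrite integral_nneseries; first last.
- by move=> k y _; rewrite lee_fin mulr_ge0.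
- by move=> k; apply/measurable_EFinP; apply: measurable_funM => //; exact/measurable_EFinP.
- by [].
apply: eq_eseriesr => k _.
by rewrite -[in LHS](setIT (B k)) -integral_indic // -ge0_integralZl ?lee_fin.
Qed.

Section Coarea.
Context (R : realType) (disp : measure_display) (X : measurableType disp)
  (m : R.-pker X ~> X) (nu : {measure set X -> \bar R}) (u : X -> R) (dl : R).
Hypotheses (mu : measurable_fun setT u) (dl_gt0 : (0 < dl)%R).
Local Open Scope ereal_scope.

Let mE k : measurable [set y | k%:R * dl < u y]%R.
Proof. exact: measurable_superlevel. Qed.

Let mF k : measurable [set y | k%:R * dl < - u y]%R.
Proof. by apply: measurable_superlevel; exact: measurableT_comp. Qed.

Lemma eseries_indic_jump_superlevel_le x :
  \sum_(0 <= k <oo) (dl%:E * indic_jump m [set y | k%:R * dl < u y]%R x) +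
  \sum_(0 <= k <oo) (dl%:E * indic_jump m [set y | k%:R * dl < - u y]%R x) <=
  \int[m x]_y (`|u y - u x|)%:E + (2 * dl)%:E.
Proof.
have jump_ge0 (B : set X) y : 0 <= (dl * `|\1_B y - \1_B x|)%:E.
  by rewrite lee_fin mulr_ge0 // ltW.
have series_ge0 (B : nat -> set X) y :
    0 <= \sum_(0 <= k <oo) (dl * `|\1_(B k) y - \1_(B k) x|)%:E.
  by apply: nneseries_ge0 => k _ _; exact: jump_ge0.
have mseries (B : nat -> set X) : (forall k, measurable (B k)) ->
    measurable_fun setT
      (fun y => \sum_(0 <= k <oo) (dl * `|\1_(B k) y - \1_(B k) x|)%:E).
  move=> mB; apply: (ge0_emeasurable_sum (P := xpredT)) => [k y _ _|k _].
    exact: jump_ge0.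
  apply/measurable_EFinP; apply: measurable_funM => //; apply: measurableT_comp => //.
  by apply: measurable_funB => //; exact: measurable_indic.
have mdist : measurable_fun setT (fun y => (`|u y - u x|)%:E).
  by apply/measurable_EFinP; apply: measurableT_comp => //; exact: measurable_funB.
have dl_ge0 := ltW dl_gt0.
rewrite !eseries_indic_jumpE // -ge0_integralD;
  [|by []|by move=> y _; exact: series_ge0|exact: mseries
   |by move=> y _; exact: series_ge0|exact: mseries].
apply: (@le_trans _ _ (\int[m x]_y ((`|u y - u x|)%:E + (2 * dl)%:E))%E).
  apply: ge0_le_integral => //.
- by move=> y _; apply: adde_ge0; exact: series_ge0.
- by apply: emeasurable_funD; exact: mseries.
- by apply: emeasurable_funD => //; exact: measurable_cst.
- move=> y _; under eq_eseriesr => k _ do rewrite !indic_superlevel.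
  under [X in _ + X]eq_eseriesr => k _ do rewrite !indic_superlevel.
  exact: eseries_step_jump_le.
rewrite ge0_integralD;
  [|by []|by move=> y _; rewrite lee_fin|exact: mdist
   |by move=> y _; rewrite lee_fin mulr_ge0 // ltW|exact: measurable_cst].
by rewrite integral_cst // prob_kernel mule1.
Qed.

Lemma integral_abs_le_eseries_superlevel :
  \int[nu]_x (`|u x|)%:E <=
  \sum_(0 <= k <oo) (dl%:E * nu [set y | k%:R * dl < u y]%R) +
  \sum_(0 <= k <oo) (dl%:E * nu [set y | k%:R * dl < - u y]%R).
Proof.
have term_ge0 (B : set X) y : 0 <= (dl * \1_B y)%:E.
  by rewrite lee_fin mulr_ge0 // ltW.
have series_ge0 (B : nat -> set X) y : 0 <= \sum_(0 <= k <oo) (dl * \1_(B k) y)%:E.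
  by apply: nneseries_ge0 => k _ _; exact: term_ge0.
have mseries (B : nat -> set X) : (forall k, measurable (B k)) ->
    measurable_fun setT (fun y => \sum_(0 <= k <oo) (dl * \1_(B k) y)%:E).
  move=> mB; apply: (ge0_emeasurable_sum (P := xpredT)) => [k y _ _|k _].
    exact: term_ge0.
  by apply/measurable_EFinP; apply: measurable_funM => //; exact: measurable_indic.
have dl_ge0 := ltW dl_gt0.
rewrite !eseries_measureE // -ge0_integralD;
  [|by []|by move=> y _; exact: series_ge0|exact: mseries
   |by move=> y _; exact: series_ge0|exact: mseries].
apply: ge0_le_integral => //.
- by apply/measurable_EFinP; exact: measurableT_comp.
- by apply: emeasurable_funD; exact: mseries.
move=> y _; under eq_eseriesr => k _ do rewrite indic_superlevel.
under [X in _ + X]eq_eseriesr => k _ do rewrite indic_superlevel.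
exact: abs_le_eseries_step.
Qed.

End Coarea.

Section Median.
Context (R : realType) (disp : measure_display) (X : measurableType disp)
  (nu : {measure set X -> \bar R}) (u : X -> R).
Local Open Scope ereal_scope.

Lemma is_median0N : is_median nu u 0 -> is_median nu (fun x => - u x)%R 0.
Proof.
case=> [med_lt med_gt]; split.
- by under eq_set => x do rewrite oppr_lt0.
- by under eq_set => x do rewrite oppr_gt0.
Qed.

Lemma median0_superlevel_le (t : R) : measurable_fun setT u -> is_median nu u 0 ->
  (0 <= t)%R -> nu [set x | t < u x]%R <= (2^-1)%:E * nu setT.
Proof.
move=> mu [_ med_gt] t_ge0; apply: le_trans med_gt.
apply: le_measure; rewrite ?inE; try exact: measurable_superlevel.
by move=> x /= /(le_lt_trans t_ge0).
Qed.

End Median.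

Section Cheeger.
Context (R : realType) (disp : measure_display) (X : measurableType disp)
  (m : R.-pker X ~> X) (nu : {measure set X -> \bar R}).
Local Open Scope ereal_scope.
Hypotheses (nu_setT : nu setT = 1) (nu_rev : m_reversible m nu).

Let nu_EFin A : measurable A -> {a : R | nu A = a%:E}.
Proof.
move=> mA; exists (fine (nu A)); rewrite fineK // ge0_fin_numE //.
have nuA_le : nu A <= nu setT by apply: le_measure; rewrite ?inE.
by rewrite (le_lt_trans nuA_le) // nu_setT ltry.
Qed.

Let nu_setC_EFin A a : measurable A -> nu A = a%:E -> nu (~` A) = (1 - a)%:E.
Proof.
move=> mA nuA; have [b nuCA] := nu_EFin (measurableC mA).
have nuU : nu (A `|` ~` A) = nu A + nu (~` A) :=
  measureU nu mA (measurableC mA) (setICr A).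
move: nuU; rewrite setUv nu_setT nuA nuCA => /eqP; rewrite eqe => /eqP ab.
by congr EFin; lra.
Qed.

Lemma lambda1_le_scaled_Pm E (a : R) : measurable E ->
  nu E = a%:E ->
  (0 < a)%R -> (a <= 2^-1)%R -> lambda1 m nu <= (a^-1)%:E * Pm m nu E.
Proof.
move=> mE nuE a_gt0 a_le.
have ainv_ge0 : (0 <= a^-1)%R by rewrite invr_ge0 ltW.
rewrite -TVm_scale_indic //.
apply: ereal_inf_lbound; exists (fun x => a^-1 * \1_E x)%R => //.
have u_ge0 x : (0 <= a^-1 * \1_E x)%R by rewrite mulr_ge0.
have mu : measurable_fun setT (fun x => a^-1 * \1_E x)%R.
  by apply: measurable_funM => //; exact: measurable_indic.
have u_norm : \int[nu]_x (`|a^-1 * \1_E x|)%:E = 1.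
  under eq_integral do rewrite ger0_norm // EFinM.
  rewrite ge0_integralZl //.
    by rewrite integral_indic // setIT nuE -EFinM mulVf // gt_eqF.
  by apply/measurable_EFinP; exact: measurable_indic.
split; [exact: mu|split; [|split => //]].
- by apply/integrableP; split; [exact/measurable_EFinP|rewrite u_norm ltry].
- rewrite /is_median nu_setT mule1; split.
  + rewrite (_ : [set x | _] = set0) ?measure0 ?lee_fin ?invr_ge0 //.
    by apply/seteqP; split => x //=; rewrite ltNge u_ge0.
  + rewrite (_ : [set x | _] = E) ?nuE ?lee_fin //.
    apply/seteqP; split => x /=; rewrite indicE.
      by case: (boolP (x \in E)) => [/set_mem //|]; rewrite mulr0 ltxx.
    by move=> Ex; rewrite mem_set // mulr1 invr_gt0.
Qed.

Lemma lambda1_le_cheeger : lambda1 m nu <= cheeger_const m nu.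
Proof.
apply/ereal_infP => _ [D [mD [D_gt0 D_lt1]] <-].
have [a nuD] := nu_EFin mD; rewrite (nu_setC_EFin mD nuD) nuD.
move: D_gt0 D_lt1; rewrite nuD !lte_fin => a_gt0 a_lt1.
have [a_le|a_gt] := lerP a 2^-1.
  rewrite min_l ?lee_fin; last by lra.
  by rewrite inver gt_eqF // muleC lambda1_le_scaled_Pm.
rewrite min_r ?lee_fin; last by lra.
rewrite inver gt_eqF ?subr_gt0 // muleC -Pm_setC //.
by apply: lambda1_le_scaled_Pm; [exact: measurableC|exact: nu_setC_EFin|lra|lra].
Qed.

Lemma cheeger_le_Pm (c : R) E : c%:E <= cheeger_const m nu -> measurable E ->
  nu E <= (2^-1)%:E ->
  c%:E * nu E <= Pm m nu E.
Proof.
move=> c_le mE.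
have [a nuE] := nu_EFin mE; rewrite nuE lee_fin => a_le.
have [->|a_gt0] := eqVneq a 0%R; first by rewrite mule0; apply: integral_ge0.
have {a_gt0}a_gt0 : (0 < a)%R by rewrite lt0r a_gt0 -lee_fin -nuE measure_ge0.
rewrite -lee_pdivlMr //; apply: (le_trans c_le); apply: ereal_inf_lbound.
exists E => /=; first by rewrite nuE !lte_fin; split => //; split => //; lra.
rewrite (nu_setC_EFin mE nuE) nuE min_l ?lee_fin; last by lra.
by rewrite inver gt_eqF.
Qed.

Lemma cheeger_eseries_superlevel_le (c dl : R) (v : X -> R) :
  (0 <= c)%R -> (0 < dl)%R -> c%:E <= cheeger_const m nu ->
  measurable_fun setT v -> is_median nu v 0 ->
  (2 * c)%:E * \sum_(0 <= k <oo) (dl%:E * nu [set y | k%:R * dl < v y]%R) <=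
  \sum_(0 <= k <oo) (dl%:E * (Pm m nu [set y | k%:R * dl < v y]%R +
                              Pm m nu [set y | k%:R * dl < v y]%R)).
Proof.
move=> c_ge0 dl_gt0 c_le mv med; have dl_ge0 := ltW dl_gt0.
rewrite -nneseriesZl; last first.
  by move=> k _; apply: mule_ge0; [rewrite lee_fin|exact: measure_ge0].
apply: lee_nneseries => [k _ _|k _].
  by apply: mule_ge0; [rewrite lee_fin mulr_ge0|apply: mule_ge0].
rewrite muleCA; apply: lee_wpmul2l; first by rewrite lee_fin.
have nu_level : nu [set y | k%:R * dl < v y]%R <= (2^-1)%:E.
  rewrite -[X in _ <= X]mule1 -nu_setT.
  by apply: median0_superlevel_le => //; rewrite mulr_ge0.
have Pm_ge := cheeger_le_Pm c_le (measurable_superlevel _ mv) nu_level.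
apply: le_trans (leeD Pm_ge Pm_ge).
by rewrite -ge0_muleDl ?lee_fin // -EFinD mulr_natl mulr2n.
Qed.

Lemma eseries_Pm_superlevel_le (dl : R) (u : X -> R) :
  measurable_fun setT u -> (0 < dl)%R ->
  \sum_(0 <= k <oo) (dl%:E * (Pm m nu [set y | k%:R * dl < u y]%R +
                              Pm m nu [set y | k%:R * dl < u y]%R)) +
  \sum_(0 <= k <oo) (dl%:E * (Pm m nu [set y | k%:R * dl < - u y]%R +
                              Pm m nu [set y | k%:R * dl < - u y]%R)) <=
  \int[nu]_x \int[m x]_y (`|u y - u x|)%:E + (2 * dl)%:E.
Proof.
move=> mu dl_gt0; have dl_ge0 := ltW dl_gt0.
have mNu : measurable_fun setT (fun x => - u x)%R by exact: measurableT_comp.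
have mE k : measurable [set y | k%:R * dl < u y]%R by exact: measurable_superlevel.
have mF k : measurable [set y | k%:R * dl < - u y]%R by exact: measurable_superlevel.
have jump_ge0 (B : nat -> set X) x :
    0 <= \sum_(0 <= k <oo) (dl%:E * indic_jump m (B k) x).
  apply: nneseries_ge0 => k _ _.
  by apply: mule_ge0; [rewrite lee_fin|exact: indic_jump_ge0].
rewrite -!integral_eseries_indic_jump //.
rewrite -ge0_integralD;
  [|by []|by move=> x _; exact: jump_ge0|by apply: measurable_eseries_indic_jump
   |by move=> x _; exact: jump_ge0|by apply: measurable_eseries_indic_jump].
apply: (@le_trans _ _ (\int[nu]_x (\int[m x]_y (`|u y - u x|)%:E + (2 * dl)%:E))%E).
  apply: ge0_le_integral => //.
  - by move=> x _; apply: adde_ge0; exact: jump_ge0.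
  - by apply: emeasurable_funD; apply: measurable_eseries_indic_jump.
  - by apply: emeasurable_funD; [exact: measurable_kernel_absdiff|exact: measurable_cst].
  - by move=> x _; exact: eseries_indic_jump_superlevel_le.
rewrite ge0_integralD;
  [|by []|by move=> x _; apply: integral_ge0|exact: measurable_kernel_absdiff
   |by move=> x _; rewrite lee_fin mulr_ge0|exact: measurable_cst].
by rewrite integral_cst // nu_setT mule1.
Qed.

Lemma cheeger_coarea_le (c dl : R) (u : X -> R) :
  (0 <= c)%R -> c%:E <= cheeger_const m nu -> measurable_fun setT u ->
  is_median nu u 0 -> (0 < dl)%R ->
  (2 * c)%:E * \int[nu]_x (`|u x|)%:E <=
  \int[nu]_x \int[m x]_y (`|u y - u x|)%:E + (2 * dl)%:E.
Proof.
move=> c_ge0 c_le mu med dl_gt0.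
have mNu : measurable_fun setT (fun x => - u x)%R by exact: measurableT_comp.
have series_ge0 (B : nat -> set X) : 0 <= \sum_(0 <= k <oo) (dl%:E * nu (B k)).
  apply: nneseries_ge0 => k _ _.
  by apply: mule_ge0; [rewrite lee_fin ltW|exact: measure_ge0].
apply: le_trans (lee_wpmul2l _ (integral_abs_le_eseries_superlevel nu mu dl_gt0)) _.
  by rewrite lee_fin mulr_ge0.
rewrite ge0_muleDr //; apply: le_trans (eseries_Pm_superlevel_le mu dl_gt0).
apply: leeD; first exact: cheeger_eseries_superlevel_le.
by apply: cheeger_eseries_superlevel_le => //; exact: is_median0N.
Qed.

Lemma cheeger_mul_L1_le_TVm (c : R) (u : X -> R) :
  (0 <= c)%R -> c%:E <= cheeger_const m nu -> measurable_fun setT u ->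
  is_median nu u 0 -> c%:E * \int[nu]_x (`|u x|)%:E <= TVm m nu u.
Proof.
move=> c_ge0 c_le mu med.
have two_c : (2 * c)%:E * \int[nu]_x (`|u x|)%:E <=
    \int[nu]_x \int[m x]_y (`|u y - u x|)%:E.
  apply/lee_addgt0Pr => e e_gt0.
  have := cheeger_coarea_le c_ge0 c_le mu med (divr_gt0 e_gt0 (ltr0n _ 2)).
  by rewrite mulrCA mulfV ?mulr1 // pnatr_eq0.
have -> : c%:E = (2^-1)%:E * (2 * c)%:E by rewrite -EFinM mulrA mulVf ?mul1r // pnatr_eq0.
by rewrite -muleA /TVm lee_wpmul2l // lee_fin invr_ge0.
Qed.

Lemma cheeger_le_TVm (u : X -> R) : measurable_fun setT u ->
  \int[nu]_x (`|u x|)%:E = 1 -> is_median nu u 0 -> cheeger_const m nu <= TVm m nu u.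
Proof.
move=> mu u_norm med; apply: lee_ge0_lbounds => [|c c_ge0 c_le].
  apply: mule_ge0; first by rewrite lee_fin invr_ge0.
  by apply: integral_ge0 => x _; apply: integral_ge0.
by rewrite -[c%:E]mule1 -u_norm cheeger_mul_L1_le_TVm.
Qed.

End Cheeger.

Unset Implicit Arguments.

Theorem theorem3p11 (R : realType) (disp : measure_display) (X : measurableType disp)
    (d : X -> X -> R) (m : R.-pker X ~> X) (nu : probability X R) :
  metric_random_walk_space d m ->
  m_invariant m nu -> m_reversible m nu ->
  cheeger_const m nu = lambda1 m nu.
Proof.
move=> _ _ nu_rev; have nu_setT := probability_setT nu.
apply/eqP; rewrite eq_le lambda1_le_cheeger // andbT.
by apply/ereal_infP => _ [u [mu [_ [u_norm med]]] <-]; exact: cheeger_le_TVm.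
Qed.
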